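(* Assume the sparsity setting with $1\le p\le2$. Let $(c^\ast,s^\ast)\in X\times Y$, $u^\ast=B(c^\ast,s^\ast)$, with $c^\ast$ a $\Phi_p$-minimizing solution, and let $u_\delta\in Z$, $s_{\mathrm{mod},\epsilon}\in Y$ with $\|u^\ast-u_\delta\|\le\delta$, $\|s^\ast-s_{\mathrm{mod},\epsilon}\|\le\epsilon$. Let $0<\alpha_{\max}<\infty$ and assume there exist $\kappa_1\in[0,1)$, $\kappa_2\ge0$, $0\le\kappa_3<\min\{1,\gamma/(2\alpha_{\max})\}$ and $\xi^\ast=(\xi_{c^\ast},\xi_{s^\ast})\in\partial\tilde{\mathcal{R}}(c^\ast,s^\ast)$ such that for all $(c,s)\in X\times Y$ $$\langle\xi^\ast,(c^\ast-c,s^\ast-s)\rangle\le\kappa_1D^{\xi^\ast}_{\tilde{\mathcal{R}}}((c,s),(c^\ast,s^\ast))+\kappa_2\|B(c,s)-B(c^\ast,s^\ast)\|+\kappa_3\|s-s^\ast\|^2.$$ For $0<\alpha\le\alpha_{\max}$ let $(c^\alpha,s^\alpha)$ be a minimizer of $J^{u_\delta,s_{\mathrm{mod},\epsilon}}_{\alpha,\nu_1\alpha,\nu_2\alpha}$. If $\alpha\sim\delta+\epsilon$, then as $\delta+\epsilon\to0$ $$D^{\xi^\ast}_{\tilde{\mathcal{R}}}((c^\alpha,s^\alpha),(c^\ast,s^\ast))=\mathcal{O}(\delta+\epsilon),\qquad\|B(c^\alpha,s^\alpha)-B(c^\ast,s^\ast)\|=\mathcal{O}(\delta+\epsilon).$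$
   Context: Sparsity setting: $X,Y,Z$ are Hilbert spaces; $X\times Y$ carries the inner product $\langle (c_1,s_1),(c_2,s_2)\rangle=\langle c_1,c_2\rangle_X+\langle s_1,s_2\rangle_Y$. $B:X\times Y\to Z$ is bilinear, satisfies $\|B(c,s)\|_Z\le C\|c\|_X\|s\|_Y$ for some $C>0$, and is sequentially weak-weak continuous. $Y_n\subset Y$ is a finite-dimensional subspace, $P:Y\to Y_n$ is linear and bounded, $s_{\mathrm{calib}}\in Y_n$. $\mathcal{R}_s:Y\to[0,\infty)$ is proper, convex and weakly lower semi-continuous. $\{\varphi_i\}_{i\in\mathbb{N}}$ is an orthonormal basis of $X$, weights satisfy $1\le w_i<\infty$, and $\Phi_p(c)=\sum_iw_i|\langle c,\varphi_i\rangle|^p$. Fix $\gamma>0$ and $\nu_1,\nu_2\in(0,\infty)$. $J^{u,s_m}_{\alpha,\beta,\mu}(c,s)=\frac12\|B(c,s)-u\|^2+\frac{\gamma}{2}\|s-s_m\|^2+\frac{\mu}{2}\|P(s)-s_{\mathrm{calib}}\|^2+\alpha\Phi_p(c)+\beta\mathcal{R}_s(s)$; $\tilde{\mathcal{R}}(c,s)=\Phi_p(c)+\frac{\nu_2}{2}\|P(s)-s_{\mathrm{calib}}\|^2+\nu_1\mathcal{R}_s(s)$. $c^\ast$ is a $\Phi_p$-minimizing solution if $c^\ast\in\arg\min\{\Phi_p(c):B(c,s^\ast)=u^\ast\}$. For a convex functional $\mathcal{R}$ and $\xi\in\partial\mathcal{R}(x^\ast)$, $D^{\xi}_{\mathcal{R}}(x,x^\ast)=\mathcal{R}(x)-\mathcal{R}(x^\ast)-\langle\xi,x-x^\ast\rangle$.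 $\alpha\sim\delta+\epsilon$ means $m(\delta+\epsilon)\le\alpha\le M(\delta+\epsilon)$ for constants $0<m\le M$. *)

From HB Require Import structures.
From mathcomp Require Import all_boot all_order all_algebra.
From mathcomp Require Import all_classical all_reals all_analysis.
Set Implicit Arguments. Unset Strict Implicit. Unset Printing Implicit Defensive.
Import Order.TTheory GRing.Theory Num.Theory.
Import numFieldNormedType.Exports.
Local Open Scope classical_set_scope.
Local Open Scope ring_scope.

Section Defs.
Variable R : realType.

(* [ip] is a (real) inner product inducing the norm of the normed module X.
   Together with X : completeNormedModType R this makes X a real Hilbert space. *)
Definition is_inner_product (X : normedModType R) (ip : X -> X -> R) : Prop :=
  [/\ (forall x y, ip x y = ip y x),
      (forall (a : R) (x y z : X), ip (a *: x + y) z = a * ip x z + ip y z)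
    & (forall x, `|x| = Num.sqrt (ip x x))].

Definition weak_cvg (X : normedModType R) (ip : X -> X -> R)
  (u : nat -> X) (x : X) : Prop :=
  forall y, (fun n => ip (u n) y) @ \oo --> ip x y.

Definition prod_ip (X Y : normedModType R) (ipX : X -> X -> R) (ipY : Y -> Y -> R)
  (a b : X * Y) : R := ipX a.1 b.1 + ipY a.2 b.2.

Definition weak_cvg_prod (X Y : normedModType R) (ipX : X -> X -> R) (ipY : Y -> Y -> R)
  (u : nat -> X * Y) (x : X * Y) : Prop :=
  forall y, (fun n => prod_ip ipX ipY (u n) y) @ \oo --> prod_ip ipX ipY x y.

Definition bilinear_map (X Y Z : normedModType R) (B : X -> Y -> Z) : Prop :=
  (forall (a : R) c1 c2 s, B (a *: c1 + c2) s = a *: B c1 s + B c2 s) /\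
  (forall (a : R) c s1 s2, B c (a *: s1 + s2) = a *: B c s1 + B c s2).

Definition seq_weak_weak_continuous (X Y Z : normedModType R)
  (ipX : X -> X -> R) (ipY : Y -> Y -> R) (ipZ : Z -> Z -> R) (B : X -> Y -> Z) : Prop :=
  forall (u : nat -> X * Y) (x : X * Y), weak_cvg_prod ipX ipY u x ->
    weak_cvg ipZ (fun n => B (u n).1 (u n).2) (B x.1 x.2).

Definition finite_dim_subspace (Y : normedModType R) (V : set Y) : Prop :=
  exists (n : nat) (e : 'I_n -> Y),
    V = [set y | exists a : 'I_n -> R, y = \sum_(i < n) a i *: e i].

Definition linear_map (Y Y' : normedModType R) (P : Y -> Y') : Prop :=
  forall (a : R) x y, P (a *: x + y) = a *: P x + P y.

Definition bounded_map (Y Y' : normedModType R) (P : Y -> Y') : Prop :=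
  exists K : R, forall y, `|P y| <= K * `|y|.

Definition convex_fun (Y : normedModType R) (f : Y -> R) : Prop :=
  forall (t : R) x y, 0 <= t <= 1 ->
    f (t *: x + (1 - t) *: y) <= t * f x + (1 - t) * f y.

(* sequential weak lower semicontinuity: x_n -> x weakly implies
   f x <= liminf f x_n (written out with epsilons) *)
Definition weakly_lsc (Y : normedModType R) (ipY : Y -> Y -> R) (f : Y -> R) : Prop :=
  forall (u : nat -> Y) (x : Y), weak_cvg ipY u x ->
    forall e : R, 0 < e -> \forall n \near \oo, f x - e < f (u n).

Definition orthonormal_basis (X : normedModType R) (ipX : X -> X -> R)
  (phi : nat -> X) : Prop :=
  (forall i j, ipX (phi i) (phi j) = (i == j)%:R) /\
  (forall x, (fun n => \sum_(i < n) ipX x (phi i) *: phi i) @ \oo --> x).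

Definition Phi_p (X : normedModType R) (ipX : X -> X -> R) (phi : nat -> X)
  (w : nat -> R) (p : R) (c : X) : \bar R :=
  (\sum_(0 <= i <oo) ((w i * `|ipX c (phi i)| `^ p)%:E))%E.

(* subgradient of an extended-real functional F at x w.r.t. the duality
   pairing [pair] (here an inner product); as usual, F x must be finite *)
Definition is_subgradient (T : zmodType) (F : T -> \bar R) (pair : T -> T -> R)
  (xi x : T) : Prop :=
  F x \is a fin_num /\ (forall y, (F x + (pair xi (y - x))%:E <= F y)%E).

Definition bregman (T : zmodType) (F : T -> \bar R) (pair : T -> T -> R)
  (xi y x : T) : \bar R :=
  (F y - F x - (pair xi (y - x))%:E)%E.

Definition Rtilde (X Y : normedModType R) (ipX : X -> X -> R) (phi : nat -> X)
  (w : nat -> R) (p : R) (P : Y -> Y) (s_calib : Y) (Rs : Y -> R) (nu1 nu2 : R)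
  (x : X * Y) : \bar R :=
  (Phi_p ipX phi w p x.1
   + ((nu2 / 2) * `|P x.2 - s_calib| ^+ 2 + nu1 * Rs x.2)%:E)%E.

Definition Jfun (X Y Z : normedModType R) (B : X -> Y -> Z) (ipX : X -> X -> R)
  (phi : nat -> X) (w : nat -> R) (p : R) (P : Y -> Y) (s_calib : Y) (Rs : Y -> R)
  (gamma : R) (u : Z) (s_m : Y) (alpha beta mu : R) (x : X * Y) : \bar R :=
  (((1 / 2) * `|B x.1 x.2 - u| ^+ 2 + (gamma / 2) * `|x.2 - s_m| ^+ 2
     + (mu / 2) * `|P x.2 - s_calib| ^+ 2)%:E
   + alpha%:E * Phi_p ipX phi w p x.1 + (beta * Rs x.2)%:E)%E.

End Defs.

From HB Require Import structures.
From mathcomp Require Import all_boot all_order all_algebra.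
From mathcomp Require Import all_classical all_reals all_analysis.
From mathcomp Require Import ring lra.
Import Order.TTheory GRing.Theory Num.Theory.
Import numFieldNormedType.Exports.
Local Open Scope classical_set_scope.
Local Open Scope ring_scope.

(* With [mu = nu2 * alpha] and [beta = nu1 * alpha] the Tikhonov functional
   splits as  J(x) = 1/2 |B x - u|^2 + gamma/2 |s - s_mod|^2 + alpha Rtilde(x)
   ([Jfun_fidelity_Rtilde]).  Comparing a minimizer x with the exact solution
   x_star and writing  Rtilde(x) - Rtilde(x_star) = D + L,  where D is the Bregman
   distance and L = <xi, x - x_star>, the source condition bounds -L by
   kappa1 D + kappa2 |B x - B x_star| + kappa3 |s - s_star|^2.  The kappa3-term is
   absorbed into the gamma-penalty since kappa3 alpha_max < gamma/2
   ([young_absorption]), giving a quadratic inequality for the residual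
   [energy_estimate]; solving it ([quadratic_root_bound]) bounds the residual,
   and then the Bregman distance, by a constant times delta + eps, using
   m (delta + eps) <= alpha <= M (delta + eps). *)

Lemma young_absorption {R : realType} (b e : R) {c k k0 : R} :
  0 < c -> 0 <= k -> k <= k0 ->
  k * (b + e) ^+ 2 <= (k0 + c) * b ^+ 2 + (k0 + k0 ^+ 2 / c) * e ^+ 2.
Proof.
move=> hc hk hkk0.
have hcross : 2 * k * b * e <= c * b ^+ 2 + k ^+ 2 / c * e ^+ 2.
  have hsq : 0 <= c * (b - k / c * e) ^+ 2 by rewrite mulr_ge0 ?sqr_ge0 ?ltW.
  have expand : c * (b - k / c * e) ^+ 2
              = c * b ^+ 2 + k ^+ 2 / c * e ^+ 2 - 2 * k * b * e.
    by field; rewrite gt_eqF.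
  by rewrite -subr_ge0 -expand.
have hk2 : k ^+ 2 / c <= k0 ^+ 2 / c.
  by rewrite ler_pM2r ?invr_gt0 // ler_pXn2r ?nnegrE // (le_trans hk).
have hb2 := sqr_ge0 b; have he2 := sqr_ge0 e.
have hkb : k * b ^+ 2 <= k0 * b ^+ 2 by rewrite ler_wpM2r.
have hke : k * e ^+ 2 <= k0 * e ^+ 2 by rewrite ler_wpM2r.
have hk2e : k ^+ 2 / c * e ^+ 2 <= k0 ^+ 2 / c * e ^+ 2 by rewrite ler_wpM2r.
have -> : k * (b + e) ^+ 2 = k * b ^+ 2 + 2 * k * b * e + k * e ^+ 2 by ring.
lra.
Qed.

Lemma quadratic_root_bound (R : realType) (a x y : R) :
  0 <= x -> 0 <= y -> a ^+ 2 <= x * a + y ^+ 2 -> a <= x + y.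
Proof.
move=> hx hy ha; rewrite leNgt; apply/negP => hlt.
have hya : y < a by lra.
have : (x + y) * a < a * a by rewrite ltr_pM2r //; lra.
have : y * y <= y * a by rewrite ler_wpM2l // ltW.
rewrite !expr2 in ha; lra.
Qed.

Lemma dist_shift {R : numDomainType} {V : normedZmodType R} (v : V) {u w : V} {S : R} :
  `|w - u| <= S -> `|v - w| <= `|v - u| + S.
Proof.
by move=> hwu; apply: le_trans (ler_distD u v w) _; rewrite lerD2l distrC.
Qed.

Section RateEstimate.
Context {R : realType} {gamma k1 k2 k3 amax m M : R}.
Hypotheses (hgamma : 0 < gamma) (hk1 : k1 < 1) (hk2 : 0 <= k2) (hk3 : 0 <= k3)
  (hamax : 0 <= amax) (habsorb : k3 * amax < gamma / 2)
  (hm : 0 < m) (hmM : m <= M).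

Definition absorb_const : R :=
  k3 * amax + (k3 * amax) ^+ 2 / (gamma / 2 - k3 * amax).
Definition energy_const : R := (1 + gamma) / 2 + absorb_const + M * k2.
Definition residual_const : R := 2 * M * k2 + 2 * energy_const + 1.
Definition bregman_const : R :=
  (energy_const + M * k2 * residual_const) / (m * (1 - k1)).
Definition rate_const : R := residual_const + 1 + bregman_const.

Lemma Mk2_ge0 : 0 <= M * k2.
Proof. by rewrite mulr_ge0 // (le_trans (ltW hm)). Qed.

Lemma absorb_const_ge0 : 0 <= absorb_const.
Proof.
have hk0 : 0 <= k3 * amax by rewrite mulr_ge0.
by rewrite addr_ge0 // divr_ge0 ?sqr_ge0 // subr_ge0 ltW.
Qed.

Lemma energy_const_ge0 : 0 <= energy_const.
Proof.
have := absorb_const_ge0; have := Mk2_ge0; have := hgamma.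
by rewrite /energy_const => *; lra.
Qed.

Lemma residual_const_ge0 : 0 <= residual_const.
Proof.
have := energy_const_ge0; have := Mk2_ge0.
by rewrite /residual_const => *; lra.
Qed.

Lemma bregman_const_ge0 : 0 <= bregman_const.
Proof.
have hnum : 0 <= energy_const + M * k2 * residual_const.
  by rewrite addr_ge0 ?energy_const_ge0 // mulr_ge0 ?Mk2_ge0 ?residual_const_ge0.
by rewrite divr_ge0 // ltW // mulr_gt0 // subr_gt0.
Qed.

(* The basic estimate.  [a], [b] are the data misfits of the minimizer,
   [d0], [e0] those of the exact solution, [r], [rs] the regularizer values,
   [L] the pairing <xi, x - x_star>, [g], [t] the distances to the exact
   solution.  Minimality, the source condition and the triangle inequalities
   give a quadratic inequality in the residual [a], in which the Bregman
   distance [r - rs - L] appears with the positive weight [(1 - k1) alpha]. *)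
Lemma energy_estimate {alpha S a b g t r rs L d0 e0 : R} :
  0 < alpha -> alpha <= amax -> alpha <= M * S -> 0 <= a -> 0 <= t ->
  0 <= d0 <= S -> 0 <= e0 <= S ->
  1 / 2 * a ^+ 2 + gamma / 2 * b ^+ 2 + alpha * r
    <= 1 / 2 * d0 ^+ 2 + gamma / 2 * e0 ^+ 2 + alpha * rs ->
  - L <= k1 * (r - rs - L) + (k2 * g + k3 * t ^+ 2) ->
  g <= a + S -> t <= b + S ->
  a ^+ 2 / 2 + (1 - k1) * (alpha * (r - rs - L))
    <= energy_const * S ^+ 2 + M * k2 * S * a.
Proof.
move=> halpha halpha_max hMS ha ht /andP[hd0 hd0S] /andP[he0 he0S] hmin hsrc hg htb.
have hS : 0 <= S := le_trans hd0 hd0S.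
have hdata : d0 ^+ 2 / 2 + gamma / 2 * e0 ^+ 2 <= (1 + gamma) / 2 * S ^+ 2.
  have hd2 : d0 ^+ 2 <= S ^+ 2 by rewrite ler_pXn2r ?nnegrE.
  have he2 : gamma / 2 * e0 ^+ 2 <= gamma / 2 * S ^+ 2.
    by rewrite ler_wpM2l ?ler_pXn2r ?nnegrE // divr_ge0 // ltW.
  by lra.
have habs : alpha * k3 * t ^+ 2 <= gamma / 2 * b ^+ 2 + absorb_const * S ^+ 2.
  have hk0 : 0 <= alpha * k3 by rewrite mulr_ge0 // ltW.
  have hk : alpha * k3 <= k3 * amax by rewrite mulrC ler_wpM2l.
  have ht2 : alpha * k3 * t ^+ 2 <= alpha * k3 * (b + S) ^+ 2.
    by rewrite ler_wpM2l // ler_pXn2r ?nnegrE // (le_trans ht).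
  have hc0 : 0 < gamma / 2 - k3 * amax by rewrite subr_gt0.
  have := young_absorption b S hc0 hk0 hk.
  have -> : k3 * amax + (gamma / 2 - k3 * amax) = gamma / 2 by ring.
  by rewrite -/absorb_const; apply: le_trans ht2.
have hfid : alpha * k2 * g <= M * k2 * S * a + M * k2 * S ^+ 2.
  have hg' : alpha * k2 * g <= alpha * k2 * (a + S).
    by rewrite ler_wpM2l // mulr_ge0 // ltW.
  have hMS' : alpha * k2 * (a + S) <= M * S * k2 * (a + S).
    by rewrite ler_wpM2r ?addr_ge0 // ler_wpM2r.
  have -> : M * k2 * S * a + M * k2 * S ^+ 2 = M * S * k2 * (a + S) by ring.
  exact: le_trans hg' hMS'.
have hsrc' : alpha * - L <= alpha * (k1 * (r - rs - L) + (k2 * g + k3 * t ^+ 2)).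
  by rewrite ler_wpM2l // ltW.
have -> : energy_const * S ^+ 2
        = (1 + gamma) / 2 * S ^+ 2 + absorb_const * S ^+ 2 + M * k2 * S ^+ 2.
  by rewrite /energy_const; ring.
have E1 : alpha * (k1 * (r - rs - L) + (k2 * g + k3 * t ^+ 2))
        = k1 * (alpha * (r - rs - L)) + alpha * k2 * g + alpha * k3 * t ^+ 2.
  by ring.
have E2 : alpha * r - alpha * rs = alpha * (r - rs - L) - alpha * - L by ring.
have E3 : (1 - k1) * (alpha * (r - rs - L))
        = alpha * (r - rs - L) - k1 * (alpha * (r - rs - L)) by ring.
lra.
Qed.

Lemma residual_estimate {alpha S a D : R} :
  0 <= alpha -> 0 <= S -> 0 <= D ->
  a ^+ 2 / 2 + (1 - k1) * (alpha * D) <= energy_const * S ^+ 2 + M * k2 * S * a ->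
  a <= residual_const * S.
Proof.
move=> halpha hS hD henergy.
have hE := energy_const_ge0.
have hreg : 0 <= (1 - k1) * (alpha * D) by rewrite !mulr_ge0 // subr_ge0 ltW.
have hsq : 2 * energy_const * S ^+ 2 <= ((2 * energy_const + 1) * S) ^+ 2.
  rewrite exprMn ler_wpM2r ?sqr_ge0 //.
  by have := sqr_ge0 energy_const; rewrite !expr2 => ?; nra.
have ha2 : a ^+ 2 <= (2 * M * k2 * S) * a + ((2 * energy_const + 1) * S) ^+ 2.
  by lra.
have -> : residual_const * S = 2 * M * k2 * S + (2 * energy_const + 1) * S.
  by rewrite /residual_const; ring.
apply: quadratic_root_bound ha2.
- by rewrite -!mulrA mulr_ge0 // mulrA mulr_ge0 ?Mk2_ge0.
- by rewrite mulr_ge0 // addr_ge0 // mulr_ge0.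
Qed.

(* Since [alpha >= m * S], the regularization term controls the Bregman
   distance [D] linearly in [S]. *)
Lemma bregman_estimate {alpha S a D : R} :
  m * S <= alpha -> 0 < S -> 0 <= D -> a <= residual_const * S ->
  a ^+ 2 / 2 + (1 - k1) * (alpha * D) <= energy_const * S ^+ 2 + M * k2 * S * a ->
  D <= bregman_const * S.
Proof.
move=> hmS hS hD ha henergy.
have hk1' : 0 < 1 - k1 by rewrite subr_gt0.
have hlow : m * (1 - k1) * S * D <= (1 - k1) * (alpha * D).
  have -> : m * (1 - k1) * S * D = (1 - k1) * (m * S * D) by ring.
  by apply: ler_wpM2l; [rewrite subr_ge0 ltW | exact: ler_wpM2r].
have hres : M * k2 * S * a <= M * k2 * residual_const * S ^+ 2.
  have -> : M * k2 * residual_const * S ^+ 2 = M * k2 * S * (residual_const * S).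
    by ring.
  by rewrite ler_wpM2l // mulr_ge0 ?Mk2_ge0 // ltW.
have hup : m * (1 - k1) * S * D <= m * (1 - k1) * S * (bregman_const * S).
  have -> : m * (1 - k1) * S * (bregman_const * S)
          = (energy_const + M * k2 * residual_const) * S ^+ 2.
    by rewrite /bregman_const; field; rewrite !gt_eqF.
  have -> : (energy_const + M * k2 * residual_const) * S ^+ 2
          = energy_const * S ^+ 2 + M * k2 * residual_const * S ^+ 2 by ring.
  have := sqr_ge0 a; lra.
by rewrite ler_pM2l ?mulr_gt0 in hup.
Qed.

(* The convergence-rate estimate over the reals: with noise levels [delta],
   [eps] and [m (delta + eps) <= alpha <= M (delta + eps)], the Bregman
   distance [r - rs - L] (nonnegative since [xi] is a subgradient) and the
   discrepancy [g] are both at most [rate_const * (delta + eps)]. *)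
Lemma rate_estimate {alpha delta eps a b g t r rs L d0 e0 : R} :
  0 < alpha -> alpha <= amax ->
  m * (delta + eps) <= alpha <= M * (delta + eps) ->
  0 <= delta -> 0 <= eps -> 0 <= a -> 0 <= t ->
  0 <= d0 -> d0 <= delta -> 0 <= e0 -> e0 <= eps ->
  1 / 2 * a ^+ 2 + gamma / 2 * b ^+ 2 + alpha * r
    <= 1 / 2 * d0 ^+ 2 + gamma / 2 * e0 ^+ 2 + alpha * rs ->
  rs + L <= r ->
  - L <= k1 * (r - rs - L) + (k2 * g + k3 * t ^+ 2) ->
  g <= a + delta -> t <= b + eps ->
  r - rs - L <= rate_const * (delta + eps) /\ g <= rate_const * (delta + eps).
Proof.
move=> halpha halpha_max /andP[hmS hMS] hdelta heps ha ht hd0 hd0d he0 he0e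
  hmin hsub hsrc hg ht_le.
set S := delta + eps in hmS hMS *.
have hS : 0 <= S by rewrite addr_ge0.
have hS0 : 0 < S.
  rewrite lt_def hS andbT; apply: contraTneq hMS => ->.
  by rewrite mulr0 -ltNge.
have hD : 0 <= r - rs - L by lra.
have hd0S : 0 <= d0 <= S by rewrite hd0 (le_trans hd0d) // lerDl.
have he0S : 0 <= e0 <= S by rewrite he0 (le_trans he0e) // lerDr.
have hgS : g <= a + S by rewrite /S; lra.
have htS : t <= b + S by rewrite /S; lra.
have henergy := energy_estimate halpha halpha_max hMS ha ht hd0S he0S hmin hsrc hgS htS.
have hres := residual_estimate (ltW halpha) hS hD henergy.
have hbreg := bregman_estimate hmS hS0 hD hres henergy.
have hK1S : 0 <= residual_const * S by rewrite mulr_ge0 ?residual_const_ge0.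
have hK2S : 0 <= bregman_const * S by rewrite mulr_ge0 ?bregman_const_ge0.
have -> : rate_const * S = residual_const * S + S + bregman_const * S.
  by rewrite /rate_const; ring.
by split; lra.
Qed.

End RateEstimate.

Lemma ip_oppr {R : realType} {V : normedModType R} {ip : V -> V -> R} :
  is_inner_product ip -> forall z x : V, ip z (- x) = - ip z x.
Proof.
case=> hsym hlin _ z x.
have ip0 : ip 0 z = 0.
  by have := hlin 1 0 0 z; rewrite scale1r addr0 mul1r => ?; lra.
by rewrite hsym -[- x]addr0 -scaleN1r hlin ip0 addr0 mulN1r hsym.
Qed.

(* Swapping the two points in the pairing with [xi] changes its sign; this
   matches the left-hand side of the source condition with <xi, x - x_star>. *)
Lemma prod_ip_swap {R : realType} {X Y : normedModType R}
    {ipX : X -> X -> R} {ipY : Y -> Y -> R} :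
  is_inner_product ipX -> is_inner_product ipY ->
  forall (xi : X * Y) (c c' : X) (s s' : Y),
  prod_ip ipX ipY xi (c' - c, s' - s) = - prod_ip ipX ipY xi ((c, s) - (c', s')).
Proof.
move=> hX hY xi c c' s s'.
by rewrite /prod_ip /= -(opprB c) -(opprB s) (ip_oppr hX) (ip_oppr hY) opprD.
Qed.

Lemma fin_num_of_scaled_bound {R : realType} {u v alpha : R} {F : \bar R} :
  0 < alpha -> (0 <= F)%E -> (u%:E + alpha%:E * F <= v%:E)%E -> F \is a fin_num.
Proof.
case: F => [r | | ] // halpha _.
by rewrite gt0_muley ?lte_fin // addey.
Qed.

Section Tikhonov.
Context {R : realType} {X Y Z : normedModType R}.
Context {ipX : X -> X -> R} {B : X -> Y -> Z}.
Context {phi : nat -> X} {w : nat -> R} {p : R} {P : Y -> Y} {s_calib : Y}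
  {Rs : Y -> R} {nu1 nu2 gamma : R}.
Hypotheses (hw : forall i, 0 <= w i) (hRs : forall y, 0 <= Rs y)
  (hnu1 : 0 <= nu1) (hnu2 : 0 <= nu2).

Local Notation Phi := (Phi_p ipX phi w p).
Local Notation Rt := (Rtilde ipX phi w p P s_calib Rs nu1 nu2).
Local Notation J u s_m alpha :=
  (Jfun B ipX phi w p P s_calib Rs gamma u s_m alpha (nu1 * alpha) (nu2 * alpha)).

Lemma Jfun_fidelity_Rtilde (u : Z) (s_m : Y) (alpha : R) (x : X * Y) :
  J u s_m alpha x
  = (((1 / 2) * `|B x.1 x.2 - u| ^+ 2 + (gamma / 2) * `|x.2 - s_m| ^+ 2)%:E
     + alpha%:E * Rt x)%E.
Proof.
rewrite /Jfun /Rtilde muleDr ?fin_num_adde_defl // -EFinM.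
rewrite addeAC -EFinD addeCA addeC; congr (_ + _)%E; congr (_%:E); ring.
Qed.

Lemma Phi_p_ge0 (c : X) : (0 <= Phi c)%E.
Proof.
apply: nneseries_ge0 => i _ _.
by rewrite lee_fin mulr_ge0 ?powR_ge0.
Qed.

Lemma Rtilde_ge0 (x : X * Y) : (0 <= Rt x)%E.
Proof.
rewrite /Rtilde adde_ge0 ?Phi_p_ge0 // lee_fin.
by rewrite addr_ge0 ?mulr_ge0 ?divr_ge0 ?sqr_ge0.
Qed.

Lemma Rtilde_fin_of_Jfun_le {u : Z} {s_m : Y} {alpha : R} {x x0 : X * Y} :
  0 < alpha -> Rt x0 \is a fin_num -> (J u s_m alpha x <= J u s_m alpha x0)%E ->
  Rt x \is a fin_num.
Proof.
move=> halpha /EFin_fin_numP[r0 Er0].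
rewrite !Jfun_fidelity_Rtilde Er0 -EFinM -EFinD.
exact: fin_num_of_scaled_bound halpha (Rtilde_ge0 x).
Qed.

End Tikhonov.

Theorem mainTheorem12
  (R : realType) (X Y Z : completeNormedModType R)
  (ipX : X -> X -> R) (ipY : Y -> Y -> R) (ipZ : Z -> Z -> R)
  (hipX : is_inner_product ipX) (hipY : is_inner_product ipY)
  (hipZ : is_inner_product ipZ)
  (B : X -> Y -> Z) (hBlin : bilinear_map B)
  (CB : R) (hCB : 0 < CB) (hBbd : forall c s, `|B c s| <= CB * `|c| * `|s|)
  (hBweak : seq_weak_weak_continuous ipX ipY ipZ B)
  (Yn : set Y) (hYn : finite_dim_subspace Yn)
  (P : Y -> Y) (hPlin : linear_map P) (hPbd : bounded_map P)
  (hPYn : forall y, Yn (P y))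
  (s_calib : Y) (hcalib : Yn s_calib)
  (Rs : Y -> R) (hRs0 : forall y, 0 <= Rs y) (hRsconv : convex_fun Rs)
  (hRslsc : weakly_lsc ipY Rs)
  (phi : nat -> X) (hphi : orthonormal_basis ipX phi)
  (w : nat -> R) (hw : forall i, 1 <= w i)
  (gamma nu1 nu2 : R) (hgamma : 0 < gamma) (hnu1 : 0 < nu1) (hnu2 : 0 < nu2)
  (p : R) (hp : 1 <= p <= 2)
  (c_star : X) (s_star : Y)
  (hmin : forall c : X, B c s_star = B c_star s_star ->
     (Phi_p ipX phi w p c_star <= Phi_p ipX phi w p c)%E)
  (alpha_max : R) (halpha_max : 0 < alpha_max)
  (kappa1 kappa2 kappa3 : R)
  (hk1 : 0 <= kappa1 < 1) (hk2 : 0 <= kappa2)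
  (hk3 : 0 <= kappa3) (hk3' : kappa3 < Num.min 1 (gamma / (2 * alpha_max)))
  (xi : X * Y)
  (hxi : is_subgradient (Rtilde ipX phi w p P s_calib Rs nu1 nu2)
           (prod_ip ipX ipY) xi (c_star, s_star))
  (hsource : forall (c : X) (s : Y),
     ((prod_ip ipX ipY xi (c_star - c, s_star - s))%:E
      <= kappa1%:E * bregman (Rtilde ipX phi w p P s_calib Rs nu1 nu2)
                       (prod_ip ipX ipY) xi (c, s) (c_star, s_star)
         + (kappa2 * `|B c s - B c_star s_star| + kappa3 * `|s - s_star| ^+ 2)%:E)%E) :
  forall m M : R, 0 < m -> m <= M ->
  exists K eta : R, 0 < eta /\
  forall (delta eps : R) (u_delta : Z) (s_mod : Y) (alpha : R) (x : X * Y),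
    0 <= delta -> 0 <= eps -> delta + eps < eta ->
    `|B c_star s_star - u_delta| <= delta ->
    `|s_star - s_mod| <= eps ->
    0 < alpha -> alpha <= alpha_max ->
    m * (delta + eps) <= alpha <= M * (delta + eps) ->
    (forall y : X * Y,
       (Jfun B ipX phi w p P s_calib Rs gamma u_delta s_mod alpha (nu1 * alpha) (nu2 * alpha) x
        <= Jfun B ipX phi w p P s_calib Rs gamma u_delta s_mod alpha (nu1 * alpha) (nu2 * alpha) y)%E) ->
    (bregman (Rtilde ipX phi w p P s_calib Rs nu1 nu2) (prod_ip ipX ipY) xi x (c_star, s_star)
       <= (K * (delta + eps))%:E)%E /\
    `|B x.1 x.2 - B c_star s_star| <= K * (delta + eps).
Proof.
move=> m M hm hmM.
have hk1' : kappa1 < 1 by case/andP: hk1.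
have habsorb : kappa3 * alpha_max < gamma / 2.
  by move: hk3'; rewrite lt_min invfM mulrA ltr_pdivlMr // => /andP[].
have hw0 i : 0 <= w i := le_trans ler01 (hw i).
exists (@rate_const _ gamma kappa1 kappa2 kappa3 alpha_max m M), 1; split => //.
move=> delta eps u_delta s_mod alpha [c s] hdelta heps _ hud hsm halpha
  halpha_le hrange hJ.
case: hxi => hfin_star hsub.
have hJstar := hJ (c_star, s_star).
have hfin := Rtilde_fin_of_Jfun_le hw0 hRs0 (ltW hnu1) (ltW hnu2) halpha hfin_star hJstar.
case/EFin_fin_numP: hfin_star => rs Ers; case/EFin_fin_numP: hfin => r Er.
rewrite !Jfun_fidelity_Rtilde Er Ers -!EFinM -!EFinD lee_fin /= in hJstar.
have hsub_cs := hsub (c, s); rewrite Er Ers -EFinD lee_fin in hsub_cs.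
have hsrc := hsource c s.
rewrite /bregman Er Ers -!EFinB -EFinM -EFinD lee_fin (prod_ip_swap hipX hipY) in hsrc.
rewrite /bregman Er Ers -!EFinB lee_fin /=.
have hg := dist_shift (B c s) hud; have ht := dist_shift s hsm.
exact: (rate_estimate hgamma hk1' hk2 hk3 (ltW halpha_max) habsorb hm hmM
  halpha halpha_le hrange hdelta heps (normr_ge0 _) (normr_ge0 _) (normr_ge0 _) hud
  (normr_ge0 _) hsm hJstar hsub_cs hsrc hg ht).
Qed.
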